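(* Let $H\subset\mathbb{R}$ be a non-trivial rank one subgroup. The semiring $\mathcal R_H$ of germs at $\lambda=1$ of $\mathbb{R}_{\max}$-valued, piecewise affine, continuous convex functions $f(\lambda)$ with slopes in $H$ (with operations pointwise max and pointwise $+$) is multiplicatively cancellative, and its semifield of fractions $\mathrm{Frac}\,\mathcal R_H$ is (isomorphic to) the semifield of germs at $\lambda=1$ of $\mathbb{R}_{\max}$-valued, piecewise affine, continuous functions $f(\lambda)$ with slopes in $H$, endowed with the operations of pointwise max and pointwise addition of germs.
   Context: $\mathbb{R}_{\max}=\mathbb{R}\cup\{-\infty\}$ with ''addition'' $\max$ and ''multiplication'' $+$. A rank one subgroup of $\mathbb{R}$ is one isomorphic to a non-zero subgroup of $\mathbb{Q}$. The germ of the constant function $-\infty$ is the zero element; multiplicatively cancellative means $f+h=g+h$ with $h\neq-\infty$ implies $f=g$. *)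

(* R : realType, R_max rendered as \bar R (values in R or -oo). *)
From HB Require Import structures.
From mathcomp Require Import all_boot all_order all_algebra.
From mathcomp Require Import boolp classical_sets reals ereal topology normedtype.
Set Implicit Arguments. Unset Strict Implicit. Unset Printing Implicit Defensive.
Import Order.TTheory GRing.Theory Num.Theory numFieldNormedType.Exports.
Local Open Scope ring_scope.
Local Open Scope classical_set_scope.

Section Defs.
Variable R : realType.

Definition rank_one_subgroup (H : set R) : Prop :=
  [/\ H 0,
      (forall x y, H x -> H y -> H (x - y)),
      (exists x, H x /\ x != 0) &
      exists phi : R -> rat,
        (forall x y, H x -> H y -> phi (x + y) = phi x + phi y) /\
        (forall x y, H x -> H y -> phi x = phi y -> x = y)].

Definition germ_eq (f g : R -> \bar R) : Prop :=
  exists e : R, 0 < e /\ forall x, `|x - 1| < e -> f x = g x.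

Definition gmax (f g : R -> \bar R) : R -> \bar R := fun x => Order.max (f x) (g x).
Definition gadd (f g : R -> \bar R) : R -> \bar R := fun x => (f x + g x)%E.
Definition gzero : R -> \bar R := fun _ => -oo%E.

Definition piece_val (o : option (R * R)) (x : R) : \bar R :=
  match o with None => -oo%E | Some (c, s) => (c + s * x)%:E end.

Definition piece_slope_in (H : set R) (o : option (R * R)) : Prop :=
  match o with None => True | Some (_, s) => H s end.

Definition pw_affine_on (H : set R) (e : R) (f : R -> \bar R) : Prop :=
  exists l : seq (R * R * option (R * R)),
    (forall p, p \in l -> piece_slope_in H p.2 /\
       forall x, `|x - 1| < e -> p.1.1 <= x <= p.1.2 -> f x = piece_val p.2 x) /\
    (forall x, `|x - 1| < e -> exists2 p, p \in l & p.1.1 <= x <= p.1.2).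

Definition continuous_on_nbhd1 (e : R) (f : R -> \bar R) : Prop :=
  forall x : R, `|x - 1| < e -> {for x, continuous f}.

Definition convex_on_nbhd1 (e : R) (f : R -> \bar R) : Prop :=
  forall x y t : R, `|x - 1| < e -> `|y - 1| < e -> 0 < t < 1 ->
    (f (t * x + (1 - t) * y)%R <= t%:E * f x + ((1 - t)%R)%:E * f y)%E.

Definition PL_germ (H : set R) (f : R -> \bar R) : Prop :=
  exists e : R, 0 < e /\ pw_affine_on H e f /\ continuous_on_nbhd1 e f.

Definition CPL_germ (H : set R) (f : R -> \bar R) : Prop :=
  exists e : R, 0 < e /\ pw_affine_on H e f /\ continuous_on_nbhd1 e f /\
    convex_on_nbhd1 e f.

(* a formal fraction f/g (i.e. f - g in tropical notation) with f, g in R_H, g <> 0 *)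
Definition frac_pair (H : set R) (f g : R -> \bar R) : Prop :=
  CPL_germ H f /\ CPL_germ H g /\ ~ germ_eq g gzero.

End Defs.

(* Near [1] a piecewise affine germ coincides with one affine piece on each side
   of [1] (the finitely many break points other than [1] stay away from it), so it
   is determined by two affine functions that agree at [1]. A non-zero element of
   R_H is therefore finite near [1], which gives cancellativity, and the fraction
   f/g is realised by the pointwise difference f - g. Conversely a two-piece germ
   is either convex, hence the max of its two pieces over the unit 0, or concave,
   hence the sum of its pieces over their max. *)
From HB Require Import structures.
From mathcomp Require Import all_boot all_order all_algebra.
From mathcomp Require Import boolp classical_sets reals ereal topology normedtype.
From mathcomp Require Import ring lra.
Set Implicit Arguments. Unset Strict Implicit. Unset Printing Implicit Defensive.
Import Order.TTheory GRing.Theory Num.Theory numFieldNormedType.Exports.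

Local Open Scope ring_scope.
Local Open Scope classical_set_scope.

Section ExtendedRealArithmetic.
Context {R : realDomainType}.
Implicit Types a b c d : \bar R.
Local Open Scope ereal_scope.

Lemma addeI_fin a b c : c \is a fin_num -> a + c = b + c -> a = b.
Proof. by move=> cf E; rewrite -(addeK a cf) E addeK. Qed.

Lemma subeD_eq a b c d : c \is a fin_num -> d \is a fin_num ->
  (a - c = b - d) <-> (a + d = b + c).
Proof.
move: c d => [c| |] [d| |] // _ _.
case: a b => [a||] [b||] //=; split=> -[E]; congr EFin.
  by rewrite -(subrK c a) E; ring.
by rewrite -(addrK d a) E; ring.
Qed.

Lemma subeDD a b c d : c \is a fin_num -> d \is a fin_num ->
  (a + b) - (c + d) = (a - c) + (b - d).
Proof. by move=> cf df; rewrite fin_num_oppeD // addeACA. Qed.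

Lemma maxe_subDD a b c d : c \is a fin_num -> d \is a fin_num ->
  maxe (a + d) (b + c) - (c + d) = maxe (a - c) (b - d).
Proof.
move=> cf df; rewrite adde_maxl subeDD // subee // adde0.
by rewrite (addeC c d) subeDD // subee // adde0.
Qed.

End ExtendedRealArithmetic.

Section RealFacts.
Context {R : realFieldType}.

Lemma seq_separated (s : seq R) (c : R) :
  exists2 d, 0 < d & forall y, y \in s -> y != c -> d <= `|y - c|.
Proof.
elim: s => [|y s [d d0 ds]]; first by exists 1.
have [->|yc] := eqVneq y c.
  by exists d => // z; rewrite inE => /predU1P[->|/ds//]; rewrite eqxx.
exists (Num.min d `|y - c|); first by rewrite lt_min d0 normr_gt0 subr_eq0.
move=> z; rewrite inE ge_min => /predU1P[->|zs zc]; first by rewrite lexx orbT.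
by rewrite ds.
Qed.

Lemma interval_contains_left (a b r x0 x : R) :
  (a != 1 -> r <= `|a - 1|) -> (b != 1 -> r <= `|b - 1|) ->
  1 - r < x0 < 1 -> a <= x0 <= b -> 1 - r < x <= 1 -> a <= x <= b.
Proof.
move=> ar br /andP[x0l x0r] /andP[ax0 x0b] /andP[xl xr].
have a_le : a <= 1 - r.
  have /ar : a != 1 by apply/eqP => a1; lra.
  by rewrite ler0_norm; lra.
have b_ge : 1 <= b.
  rewrite leNgt; apply/negP => b1; have /br : b != 1 by apply/eqP => b1'; lra.
  by rewrite ler0_norm; lra.
by apply/andP; split; lra.
Qed.

Lemma interval_contains_right (a b r x0 x : R) :
  (a != 1 -> r <= `|a - 1|) -> (b != 1 -> r <= `|b - 1|) ->
  1 < x0 < 1 + r -> a <= x0 <= b -> 1 <= x < 1 + r -> a <= x <= b.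
Proof.
move=> ar br /andP[x0l x0r] /andP[ax0 x0b] /andP[xl xr].
have b_ge : 1 + r <= b.
  have /br : b != 1 by apply/eqP => b1; lra.
  by rewrite ger0_norm; lra.
have a_le : a <= 1.
  rewrite leNgt; apply/negP => a1; have /ar : a != 1 by apply/eqP => a1'; lra.
  by rewrite ger0_norm; lra.
by apply/andP; split; lra.
Qed.

Lemma max_affine_le1 (a s b t x : R) : a + s = b + t -> s <= t -> x <= 1 ->
  Num.max (a + s * x) (b + t * x) = a + s * x.
Proof.
move=> ab st x1; apply/max_idPl; rewrite -subr_ge0.
have -> : a + s * x - (b + t * x) = (t - s) * (1 - x).
  by rewrite (_ : a = b + t - s); [ring | lra].
by apply: mulr_ge0; lra.
Qed.

Lemma max_affine_ge1 (a s b t x : R) : a + s = b + t -> s <= t -> 1 <= x ->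
  Num.max (a + s * x) (b + t * x) = b + t * x.
Proof.
move=> ab st x1; apply/max_idPr; rewrite -subr_ge0.
have -> : b + t * x - (a + s * x) = (t - s) * (x - 1).
  by rewrite (_ : a = b + t - s); [ring | lra].
by apply: mulr_ge0; lra.
Qed.

End RealFacts.

Section Germs.
Variable R : realType.
Implicit Types (H : set R) (e : R) (f g h : R -> \bar R) (pL pR : option (R * R)).

Lemma near1P (P : R -> Prop) :
  (\forall x \near (1 : R), P x) <-> exists2 e, 0 < e & forall x, `|x - 1| < e -> P x.
Proof.
rewrite nbhs_normP; split=> -[e e0 eP]; exists e => // x.
  by move=> x1; apply: eP; rewrite /ball_ /= distrC.
by rewrite /ball_ /= distrC; exact: eP.
Qed.

Lemma germ_eqP f g : germ_eq f g <-> \forall x \near (1 : R), f x = g x.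
Proof.
by rewrite near1P; split=> [[e [e0 fg]]|[e e0 fg]]; exists e.
Qed.

Lemma germ_neq0 f : f 1 != -oo%E -> ~ germ_eq f (@gzero R).
Proof.
by move=> f1 /germ_eqP/nbhs_singleton; rewrite /gzero; apply/eqP.
Qed.

Definition germ_pieces f pL pR : Prop :=
  \forall x \near (1 : R),
    (x <= 1 -> f x = piece_val pL x) /\ (1 <= x -> f x = piece_val pR x).

Lemma pw_affine_germ_pieces H e f : 0 < e -> pw_affine_on H e f ->
  exists pL pR, [/\ piece_slope_in H pL, piece_slope_in H pR & germ_pieces f pL pR].
Proof.
move=> e0 [l [lP lcover]].
have [d d0 dsep] := seq_separated [seq p.1.1 | p <- l] 1.
have [d' d'0 d'sep] := seq_separated [seq p.1.2 | p <- l] 1.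
pose r := Num.min e (Num.min d d').
have [r0 re rd rd'] : [/\ 0 < r, r <= e, r <= d & r <= d'].
  by rewrite !lt_min !ge_min e0 d0 d'0 !lexx !orbT.
have sep p : p \in l ->
    (p.1.1 != 1 -> r <= `|p.1.1 - 1|) /\ (p.1.2 != 1 -> r <= `|p.1.2 - 1|).
  move=> pl; split=> p1.
    by apply: le_trans rd _; apply: dsep p1; apply: map_f.
  by apply: le_trans rd' _; apply: d'sep p1; apply: map_f.
have near_e x : `|x - 1| < r -> `|x - 1| < e by move=> /lt_le_trans; apply.
have [p pl px0] : exists2 p, p \in l & p.1.1 <= 1 - r / 2 <= p.1.2.
  by apply: lcover; apply: near_e; rewrite (_ : _ - 1 = - (r / 2)) ?normrN ?gtr0_norm; lra.
have [q ql qx0] : exists2 q, q \in l & q.1.1 <= 1 + r / 2 <= q.1.2.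
  by apply: lcover; apply: near_e; rewrite (_ : _ - 1 = r / 2) ?gtr0_norm; lra.
exists p.2, q.2; split; [exact: (lP p pl).1 | exact: (lP q ql).1 |].
apply/near1P; exists r => // x xr; have := xr; rewrite ltr_norml => /andP[xl xr'].
have [pa pb] := sep p pl; have [qa qb] := sep q ql.
split=> x1.
  apply: (lP p pl).2; first exact: near_e.
  by apply: (interval_contains_left pa pb _ px0); apply/andP; split; lra.
apply: (lP q ql).2; first exact: near_e.
by apply: (interval_contains_right qa qb _ qx0); apply/andP; split; lra.
Qed.

Lemma germ_pieces_at1 f pL pR : germ_pieces f pL pR -> piece_val pL 1 = piece_val pR 1.
Proof. by move=> /nbhs_singleton[fL fR]; rewrite -fL // -fR. Qed.

Lemma germ_pieces_some f pL pR : germ_pieces f pL pR -> ~ germ_eq f (@gzero R) ->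
  exists cL sL cR sR, pL = Some (cL, sL) /\ pR = Some (cR, sR).
Proof.
move=> fp f0; have := germ_pieces_at1 fp.
case: pL fp => [[cL sL]|]; case: pR => [[cR sR]|] //= fp _; first by exists cL, sL, cR, sR.
exfalso; apply: f0; apply/germ_eqP; apply: filterS fp => x [fL fR].
by case: (lerP x 1) => [x1|/ltW x1]; [rewrite fL | rewrite fR].
Qed.

Lemma pw_affine_on_pieces H e f pL pR :
  piece_slope_in H pL -> piece_slope_in H pR ->
  (forall x, `|x - 1| < e ->
     (x <= 1 -> f x = piece_val pL x) /\ (1 <= x -> f x = piece_val pR x)) ->
  pw_affine_on H e f.
Proof.
move=> sL sR fp; exists [:: ((1 - e, 1), pL); ((1, 1 + e), pR)]; split.
  move=> p; rewrite !inE => /orP[]/eqP-> /=; split=> // x /fp[fL fR] /andP[x1 x2].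
    exact: fL.
  exact: fR.
move=> x; rewrite ltr_norml => /andP[xl xr]; have [x1|x1] := lerP x 1.
  by exists ((1 - e, 1), pL); rewrite ?mem_head //=; apply/andP; split; lra.
by exists ((1, 1 + e), pR); rewrite ?inE ?eqxx ?orbT //=; apply/andP; split; lra.
Qed.

Lemma PL_germP H f : PL_germ H f <->
  (exists pL pR, [/\ piece_slope_in H pL, piece_slope_in H pR & germ_pieces f pL pR]) /\
  \forall x \near (1 : R), {for x, continuous f}.
Proof.
split=> [[e [e0 [pw fc]]]|[[pL [pR [sL sR /near1P[e1 e10 fp]]]] /near1P[e2 e20 fc]]].
  by split; [exact: pw_affine_germ_pieces pw | apply/near1P; exists e].
exists (Num.min e1 e2); split; first by rewrite lt_min e10 e20.
split=> [|x]; last by rewrite lt_min => /andP[_]; exact: fc.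
by apply: pw_affine_on_pieces sL sR _ => x; rewrite lt_min => /andP[+ _]; exact: fp.
Qed.

Lemma CPL_germ_PL H f : CPL_germ H f -> PL_germ H f.
Proof. by move=> [e [e0 [pw [fc _]]]]; exists e. Qed.

Lemma PL_germ_fin_num H f : PL_germ H f -> ~ germ_eq f (@gzero R) ->
  \forall x \near (1 : R), f x \is a fin_num.
Proof.
move=> /PL_germP[[pL [pR [_ _ fp]]] _] f0.
have [cL [sL [cR [sR [eL eR]]]]] := germ_pieces_some fp f0; subst pL pR.
by apply: filterS fp => x [fL fR]; case: (lerP x 1) => [x1|/ltW x1]; [rewrite fL | rewrite fR].
Qed.

Definition germ_sub f g : R -> \bar R := fun x => (f x - g x)%E.

Definition piece_sub (o : option (R * R)) (c s : R) : option (R * R) :=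
  omap (fun p => (p.1 - c, p.2 - s)) o.

Lemma piece_val_sub o c s x :
  piece_val (piece_sub o c s) x = (piece_val o x - (c + s * x)%:E)%E.
Proof. by case: o => [[c0 s0]|] //=; congr EFin; ring. Qed.

Lemma piece_slope_in_sub H o c s : (forall x y, H x -> H y -> H (x - y)) ->
  piece_slope_in H o -> H s -> piece_slope_in H (piece_sub o c s).
Proof. by move=> Hsub; case: o => [[c0 s0]|] //= /Hsub; apply. Qed.

Lemma PL_germ_sub H f g : (forall x y, H x -> H y -> H (x - y)) ->
  PL_germ H f -> PL_germ H g -> ~ germ_eq g (@gzero R) -> PL_germ H (germ_sub f g).
Proof.
move=> Hsub PLf PLg g0; have gfin := PL_germ_fin_num PLg g0.
move: PLf PLg => /PL_germP[[pL [pR [sL sR fp]]] fc] /PL_germP[[qL [qR [tL tR gp]]] gc].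
have [cL [uL [cR [uR [eL eR]]]]] := germ_pieces_some gp g0; subst qL qR.
apply/PL_germP; split.
  exists (piece_sub pL cL uL), (piece_sub pR cR uR).
  split; [exact: piece_slope_in_sub | exact: piece_slope_in_sub |].
  apply: filterS2 fp gp => x [fL fR] [gL gR].
  by split=> x1; rewrite /germ_sub piece_val_sub; [rewrite fL ?gL | rewrite fR ?gR].
apply: filterS3 fc gc gfin => x fx gx gxfin.
by apply: cvgeB => //; rewrite fin_num_adde_defl // fin_numN.
Qed.

Lemma CPL_germ_max_affine H (a s b t : R) : H s -> H t -> s <= t -> a + s = b + t ->
  CPL_germ H (fun x => (Num.max (a + s * x) (b + t * x))%:E).
Proof.
move=> Hs Ht st ab; exists 1; split=> //; split; [|split].
- apply: (pw_affine_on_pieces (pL := Some (a, s)) (pR := Some (b, t))) => // x _.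
  by split=> x1 /=; [rewrite max_affine_le1 | rewrite max_affine_ge1].
- move=> x _; apply: cvg_EFin; first exact: nearW.
  have affine_cont (c r : R) : {for x, continuous (fun y : R => c + r * y)}.
    by apply: cvgD; [exact: cvg_cst | apply: cvgM; [exact: cvg_cst | exact: cvg_id]].
  exact: continuous_max (affine_cont a s) (affine_cont b t).
- move=> x y u _ _ /andP[u0 u1].
  have affine_comb (c r : R) :
      c + r * (u * x + (1 - u) * y) = u * (c + r * x) + (1 - u) * (c + r * y) by ring.
  rewrite -!EFinM -EFinD lee_fin ge_max !affine_comb.
  have [u_ge0 u'_ge0] : 0 <= u /\ 0 <= 1 - u by rewrite subr_ge0 !ltW.
  by apply/andP; split; apply: lerD; apply: ler_wpM2l => //; rewrite le_max lexx ?orbT.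
Qed.

Lemma CPL_germ_affine H (c s : R) : H s -> CPL_germ H (fun x => (c + s * x)%:E).
Proof.
move=> Hs; have := CPL_germ_max_affine Hs Hs (lexx s) (erefl (c + s)).
by congr CPL_germ; apply/funext => x; rewrite maxxx.
Qed.

Lemma CPL_germ_cst H (c : R) : H 0 -> CPL_germ H (fun=> c%:E).
Proof.
by move=> /(CPL_germ_affine c); congr CPL_germ; apply/funext => x; rewrite mul0r addr0.
Qed.

Lemma CPL_germ_gzero H : CPL_germ H (@gzero R).
Proof.
exists 1; split=> //; split; [|split].
- by apply: (pw_affine_on_pieces (pL := None) (pR := None)).
- by move=> x _; exact: cvg_cst.
- by move=> x y u _ _ _; rewrite leNye.
Qed.

Lemma PL_germ_frac H h :
  H 0 -> (forall x y, H x -> H y -> H (x - y)) -> PL_germ H h ->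
  exists f g, frac_pair H f g /\ germ_eq (germ_sub f g) h.
Proof.
move=> H0 Hsub /PL_germP[[pL [pR [sL sR hp]]] _].
have Hadd x y : H x -> H y -> H (x + y).
  by move=> Hx Hy; have := Hsub _ _ Hx (Hsub _ _ H0 Hy); rewrite sub0r opprK.
have := germ_pieces_at1 hp.
case: pL sL hp => [[cL s1]|] /= sL hp; case: pR sR hp => [[cR s2]|] /= sR hp //; last first.
  move=> _; exists (@gzero R), (fun=> 0%:E); split.
    by split; [exact: CPL_germ_gzero | split; [exact: CPL_germ_cst | exact: germ_neq0]].
  apply/germ_eqP; apply: filterS hp => x [hL hR].
  by case: (lerP x 1) => [x1|/ltW x1]; [rewrite hL | rewrite hR].
move=> [E]; rewrite !mulr1 in E.
have [s12|s21] := lerP s1 s2.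
  exists (fun x => (Num.max (cL + s1 * x) (cR + s2 * x))%:E), (fun=> 0%:E); split.
    by split; [exact: CPL_germ_max_affine | split; [exact: CPL_germ_cst | exact: germ_neq0]].
  apply/germ_eqP; apply: filterS hp => x [hL hR]; rewrite /germ_sub sube0.
  case: (lerP x 1) => [x1|/ltW x1]; first by rewrite hL // max_affine_le1.
  by rewrite hR // max_affine_ge1.
have [{}s21 {}E] := (ltW s21, esym E).
exists (fun x => ((cL + cR) + (s1 + s2) * x)%:E).
exists (fun x => (Num.max (cR + s2 * x) (cL + s1 * x))%:E); split.
  split; first exact/CPL_germ_affine/Hadd.
  by split; [exact: CPL_germ_max_affine | exact: germ_neq0].
apply/germ_eqP; apply: filterS hp => x [hL hR]; rewrite /germ_sub -EFinB.
case: (lerP x 1) => [x1|/ltW x1].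
  by rewrite hL // max_affine_le1 //=; congr EFin; ring.
by rewrite hR // max_affine_ge1 //=; congr EFin; ring.
Qed.

Lemma frac_pair_fin_num H f g : frac_pair H f g -> \forall x \near (1 : R), g x \is a fin_num.
Proof. by move=> [_ [/CPL_germ_PL PLg g0]]; exact: PL_germ_fin_num PLg g0. Qed.

Lemma germ_eq_addr_cancel f g h : (\forall x \near (1 : R), h x \is a fin_num) ->
  germ_eq (gadd f h) (gadd g h) -> germ_eq f g.
Proof.
move=> hfin /germ_eqP fgh; apply/germ_eqP.
by apply: filterS2 hfin fgh => x; exact: addeI_fin.
Qed.

Section FinDenominators.
Variables f g f' g' : R -> \bar R.
Hypothesis gfin : \forall x \near (1 : R), g x \is a fin_num.
Hypothesis g'fin : \forall x \near (1 : R), g' x \is a fin_num.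

Lemma germ_sub_eqP :
  germ_eq (germ_sub f g) (germ_sub f' g') <-> germ_eq (gadd f g') (gadd f' g).
Proof.
rewrite !germ_eqP; split=> E; apply: filterS3 gfin g'fin E => x gx g'x fg;
  exact/(subeD_eq _ _ gx g'x).
Qed.

Lemma germ_sub_max : germ_eq (germ_sub (gmax (gadd f g') (gadd f' g)) (gadd g g'))
                             (gmax (germ_sub f g) (germ_sub f' g')).
Proof. by apply/germ_eqP; apply: filterS2 gfin g'fin => x gx g'x; exact: maxe_subDD. Qed.

Lemma germ_sub_add : germ_eq (germ_sub (gadd f f') (gadd g g'))
                             (gadd (germ_sub f g) (germ_sub f' g')).
Proof. by apply/germ_eqP; apply: filterS2 gfin g'fin => x gx g'x; exact: subeDD. Qed.

End FinDenominators.

End Germs.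

Theorem proposition4p5 (R : realType) (H : set R) :
  rank_one_subgroup H ->
  (* R_H is multiplicatively cancellative *)
  (forall f g h : R -> \bar R, CPL_germ H f -> CPL_germ H g -> CPL_germ H h ->
     ~ germ_eq h (@gzero R) -> germ_eq (gadd f h) (gadd g h) -> germ_eq f g)
  /\
  (* Frac R_H (pairs (f,g), g <> 0, modulo f+g' = f'+g) is isomorphic to the
     semifield of germs of piecewise affine continuous functions with slopes in H *)
  (exists Phi : (R -> \bar R) -> (R -> \bar R) -> (R -> \bar R),
     (forall f g, frac_pair H f g -> PL_germ H (Phi f g)) /\
     (forall f g f' g', frac_pair H f g -> frac_pair H f' g' ->
        (germ_eq (Phi f g) (Phi f' g') <-> germ_eq (gadd f g') (gadd f' g))) /\
     (forall h, PL_germ H h -> exists f g, frac_pair H f g /\ germ_eq (Phi f g) h) /\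
     (forall f g f' g', frac_pair H f g -> frac_pair H f' g' ->
        germ_eq (Phi (gmax (gadd f g') (gadd f' g)) (gadd g g'))
                (gmax (Phi f g) (Phi f' g'))) /\
     (forall f g f' g', frac_pair H f g -> frac_pair H f' g' ->
        germ_eq (Phi (gadd f f') (gadd g g')) (gadd (Phi f g) (Phi f' g')))).
Proof.
move=> [H0 Hsub _ _]; split.
  move=> f g h _ _ /CPL_germ_PL PLh h0.
  exact/germ_eq_addr_cancel/(PL_germ_fin_num PLh h0).
exists (@germ_sub R); split.
  by move=> f g [/CPL_germ_PL PLf [/CPL_germ_PL PLg g0]]; exact: PL_germ_sub.
split.
  by move=> f g f' g' /frac_pair_fin_num gfin /frac_pair_fin_num g'fin; exact: germ_sub_eqP.
split; first by move=> h; exact: PL_germ_frac.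
by split=> f g f' g' /frac_pair_fin_num gfin /frac_pair_fin_num g'fin;
  [exact: germ_sub_max | exact: germ_sub_add].
Qed.
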